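(* For all $n\ge2$ and $m\ge1$, the cardinality sensitivity of affine maximizers for $n$ players and $m$ items satisfies $\mu_c(n,m)\le\lceil m/2\rceil$.
   Context: Players $[n]$, items $[m]$, allocations $\Omega=\{A\in\{0,1\}^{n\times m}:\sum_iA_{i,j}=1\ \forall j\}$; $A_i\in\{0,1\}^m$ denotes the bundle (row) of player $i$. An affine maximizer is $f:\mathbb R^{n\times m}\to\Omega$ with $f(\theta)\in\arg\max_{A\in\Omega}\{c_A+\sum_iw_i\theta_i\cdot A_i\}$ for nonzero weights $w_i$ and reals $c_A$. Difference sets $Q_A=\mathrm{cl}\{\theta:f(\theta)=A\}$; indifference complex $\mathcal I(f)=\{\mathcal O\subseteq\Omega:\bigcap_{A\in\mathcal O}Q_A\ne\emptyset\}$. Let $\Psi_{(n,m)}$ be the set of indifference complexes of affine maximizers. With $\mathrm{Cd}(a,b)=\big||a|_1-|b|_1\big|$, define $\mu_c(n,m)=\min_{\mathcal I\in\Psi_{(n,m)}}\max\{\mathrm{Cd}(A_i,B_i): A,B\in F\text{ for some }F\in\mathcal I,\ i\in[n]\}$. *)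

From HB Require Import structures.
From mathcomp Require Import all_boot all_order all_algebra.
From mathcomp Require Import reals.
Set Implicit Arguments. Unset Strict Implicit. Unset Printing Implicit Defensive.
Import Order.TTheory GRing.Theory Num.Theory.
Local Open Scope ring_scope.

(* Allocations Omega: each item j : 'I_m is given to exactly one player A j : 'I_n.
   This is the 0/1 matrix A with A_{i,j} = 1 iff A j = i (column sums are 1). *)
Definition alloc (n m : nat) := {ffun 'I_m -> 'I_n}.

Definition bundle n m (A : alloc n m) (i : 'I_n) : {set 'I_m} := [set j | A j == i].

Definition am_value (R : realType) n m (w : 'I_n -> R) (c : alloc n m -> R)
  (theta : 'M[R]_(n, m)) (A : alloc n m) : R :=
  c A + \sum_(i < n) w i * \sum_(j in bundle A i) theta i j.

Definition affine_maximizer (R : realType) n m (f : 'M[R]_(n, m) -> alloc n m) : Prop :=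
  exists (w : 'I_n -> R) (c : alloc n m -> R),
    (forall i, w i != 0) /\
    forall theta (B : alloc n m), am_value w c theta B <= am_value w c theta (f theta).

(* theta belongs to the difference set Q_A = closure {theta' | f theta' = A}
   (closure in the Euclidean topology of R^{n x m}, written with entrywise balls) *)
Definition in_diff_set (R : realType) n m (f : 'M[R]_(n, m) -> alloc n m)
  (A : alloc n m) (theta : 'M[R]_(n, m)) : Prop :=
  forall e : R, 0 < e -> exists theta', f theta' = A /\
    forall i j, `|theta' i j - theta i j| < e.

Definition is_indiff_complex (R : realType) n m (f : 'M[R]_(n, m) -> alloc n m)
  (I : {set {set alloc n m}}) : Prop :=
  forall O : {set alloc n m},
    O \in I <-> exists theta, forall A, A \in O -> in_diff_set f A theta.

Definition in_Psi (R : realType) n m (I : {set {set alloc n m}}) : Prop :=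
  exists f : 'M[R]_(n, m) -> alloc n m, affine_maximizer f /\ is_indiff_complex f I.

Definition Cd n m (A B : alloc n m) (i : 'I_n) : nat :=
  `|(#|bundle A i|)%:Z - (#|bundle B i|)%:Z|%N.

(* max { Cd(A_i,B_i) : A,B in F for some F in I, i in [n] } (0 if empty) *)
Definition card_sens n m (I : {set {set alloc n m}}) : nat :=
  \max_(F in I) \max_(A in F) \max_(B in F) \max_(i < n) Cd A B i.

From mathcomp Require Import all_boot all_order all_algebra.
From mathcomp Require Import reals.
From mathcomp Require Import boolp zify ring lra.
Set Implicit Arguments. Unset Strict Implicit. Unset Printing Implicit Defensive.
Import Order.TTheory GRing.Theory Num.Theory.
Local Open Scope ring_scope.

(* Take unit weights and [c_A = - sum_i |A_i|^2]. By continuity of the objective in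
   [theta], every allocation in the closure of a difference set at [theta] is optimal
   at [theta]. If [A] and [B] are both optimal and [|A_i| > |B_i| + ceil(m/2)], pick
   an item [j] of [A_i] outside [B_i] and exchange its owners between [A] and [B]:
   the sum of the two linear parts is unchanged while the sum of the penalties
   strictly decreases, so one of the new allocations beats [A] or [B]. *)

Section AffineMaximizer.
Variables (R : realType) (n m : nat) (w : 'I_n -> R) (c : alloc n m -> R).

Lemma am_valueB (th th' : 'M[R]_(n, m)) (X : alloc n m) :
  am_value w c th' X - am_value w c th X =
  \sum_(i < n) w i * \sum_(j in bundle X i) (th' i j - th i j).
Proof.
rewrite /am_value opprD addrACA subrr add0r -sumrB.
by apply: eq_bigr => i _; rewrite -mulrBr -sumrB.
Qed.

Lemma am_value_near (e : R) (th th' : 'M[R]_(n, m)) (X : alloc n m) :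
  0 <= e -> (forall i j, `|th' i j - th i j| < e) ->
  `|am_value w c th' X - am_value w c th X| <= e * \sum_(i < n) `|w i| * m%:R.
Proof.
move=> e_ge0 near; rewrite am_valueB mulr_sumr.
apply: le_trans (ler_norm_sum _ _ _) _; apply: ler_sum => i _.
rewrite normrM mulrCA ler_wpM2l //.
apply: le_trans (ler_norm_sum _ _ _) _.
apply: (@le_trans _ _ (\sum_(j in bundle X i) e)).
  by apply: ler_sum => j _; exact: ltW.
rewrite sumr_const mulr_natr ler_wpMn2l //.
by rewrite -[leqRHS](card_ord m) max_card.
Qed.

Lemma diff_set_maximal (f : 'M[R]_(n, m) -> alloc n m) (A : alloc n m) th :
  (forall th' B, am_value w c th' B <= am_value w c th' (f th')) ->
  in_diff_set f A th -> forall B, am_value w c th B <= am_value w c th A.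
Proof.
move=> f_max A_near B; rewrite leNgt; apply/negP => lt_AB.
set g := am_value w c th B - am_value w c th A.
have g_gt0 : 0 < g by rewrite subr_gt0.
set K := \sum_(i < n) `|w i| * m%:R.
have K_ge0 : 0 <= K by apply: sumr_ge0 => i _; rewrite mulr_ge0.
(* [e] is small enough that two perturbations of size [e * K] cannot close the gap [g] *)
set e := g / (2 * K + 1).
have e_gt0 : 0 < e by rewrite divr_gt0 // ltr_wpDl // mulr_ge0.
have gE : 2 * (e * K) + e = g by rewrite /e; field; lra.
have [th' [fA near]] := A_near e e_gt0.
have := f_max th' B; rewrite fA.
move: (am_value_near A (ltW e_gt0) near) (am_value_near B (ltW e_gt0) near).
rewrite -/K !ler_norml => /andP[? ?] /andP[? ?] ?.
rewrite /g in gE; lra.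
Qed.

Definition am_argmax (A0 : alloc n m) (th : 'M[R]_(n, m)) : alloc n m :=
  [arg max_(X > A0) am_value w c th X]%O.

Lemma am_argmax_max A0 th B : am_value w c th B <= am_value w c th (am_argmax A0 th).
Proof. by rewrite /am_argmax; case: arg_maxP => // X _; apply. Qed.

Lemma affine_maximizer_am_argmax A0 :
  (forall i, w i != 0) -> affine_maximizer (am_argmax A0).
Proof. by move=> w_neq0; exists w, c; split=> // th B; exact: am_argmax_max. Qed.

End AffineMaximizer.

Definition indiff_complex (R : realType) n m (f : 'M[R]_(n, m) -> alloc n m) :
    {set {set alloc n m}} :=
  [set O : {set alloc n m} |
   `[< exists th, forall A, A \in O -> in_diff_set f A th >]].

Lemma indiff_complexP (R : realType) n m (f : 'M[R]_(n, m) -> alloc n m) :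
  is_indiff_complex f (indiff_complex f).
Proof. by move=> O; rewrite inE; split=> /asboolP. Qed.

Lemma card_sens_leq n m (I : {set {set alloc n m}}) k :
  (forall F A B i, F \in I -> A \in F -> B \in F -> (Cd A B i <= k)%N) ->
  (card_sens I <= k)%N.
Proof.
move=> Cd_le; apply/bigmax_leqP => F FI; apply/bigmax_leqP => A AF.
by apply/bigmax_leqP => B BF; apply/bigmax_leqP => i _; exact: Cd_le FI AF BF.
Qed.

Section ItemMoves.
Variables (n m : nat).
Implicit Types (X Y : alloc n m) (i p r : 'I_n) (j : 'I_m).

Definition move_item X j p : alloc n m := [ffun k => if k == j then p else X k].

Definition sqcard_sum X : nat := \sum_(i < n) #|bundle X i| ^ 2.

Lemma card_bundle_move X j p r :
  (#|bundle (move_item X j p) r| + (X j == r) = #|bundle X r| + (p == r))%N.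
Proof.
rewrite (cardsD1 j (bundle X r)) (cardsD1 j (bundle _ r)).
have -> : bundle (move_item X j p) r :\ j = bundle X r :\ j.
  by apply/setP => k; rewrite !inE ffunE; case: eqP.
by rewrite !inE ffunE eqxx addnAC [RHS]addnAC (addnC (p == r)).
Qed.

Lemma card_bundle_pair X i p : i != p -> (#|bundle X i| + #|bundle X p| <= m)%N.
Proof.
move=> ip; rewrite -cardsUI.
have -> : bundle X i :&: bundle X p = set0.
  apply/setP => k; rewrite !inE; apply/negP => /andP[/eqP -> /eqP Xp].
  by rewrite Xp eqxx in ip.
by rewrite cards0 addn0 -[leqRHS](card_ord m) max_card.
Qed.

Lemma sum_indicator (a : 'I_n) (F : 'I_n -> nat) :
  (\sum_(r < n) (a == r) * F r = F a)%N.
Proof.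
rewrite (bigD1 a) //= eqxx mul1n big1 ?addn0 // => r ra.
by rewrite eq_sym (negbTE ra).
Qed.

(* Moving one item from [X j] to [p] turns [x^2 + u^2] into [(x-1)^2 + (u+1)^2]. *)
Lemma sqcard_sum_move X j p : p != X j ->
  (sqcard_sum (move_item X j p) + 2 * #|bundle X (X j)|
   = sqcard_sum X + 2 * #|bundle X p| + 2)%N.
Proof.
move=> pXj.
have player r : (#|bundle (move_item X j p) r| ^ 2 + 2 * ((X j == r) * #|bundle X r|)
    = #|bundle X r| ^ 2 + 2 * ((p == r) * #|bundle X r|) + (X j == r) * 1 + (p == r) * 1)%N.
  have := card_bundle_move X j p r.
  case: (eqVneq (X j) r) => [<-|_]; first by rewrite (negbTE pXj); nia.
  by case: (p == r); nia.
have := eq_bigr (fun r : 'I_n => _) (fun r _ => player r) : (\sum_(r < n) _ = _)%N.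
rewrite !big_split /= !sum_indicator !big1_eq /sqcard_sum.
by rewrite !addn0 !mul2n -!addnn => ->; rewrite -addnA.
Qed.

(* With [x, u, y, v] the sizes of [A_i, A_(B j), B_i, B_(B j)], the change is
   [2 (u + y - x - v) + 4]; it is negative as [x + u <= m <= 2 ceil(m/2)] and [v >= 1]. *)
Lemma sqcard_sum_exchange_lt (A B : alloc n m) i j :
  A j = i -> B j != i -> (#|bundle B i| + uphalf m < #|bundle A i|)%N ->
  (sqcard_sum (move_item A j (B j)) + sqcard_sum (move_item B j i)
   < sqcard_sum A + sqcard_sum B)%N.
Proof.
move=> Aj Bj gap.
have := @sqcard_sum_move B j i; rewrite eq_sym => /(_ Bj).
have := @sqcard_sum_move A j (B j); rewrite Aj => /(_ Bj).
have := card_bundle_pair A Bj.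
have : (0 < #|bundle B (B j)|)%N by apply/card_gt0P; exists j; rewrite inE.
have : (m <= (uphalf m).*2)%N by rewrite uphalf_half; have := odd_double_half m; lia.
lia.
Qed.

Lemma move_item_swap (R : realType) (th : 'M[R]_(n, m)) X Y j :
  \sum_(k < m) th (move_item X j (Y j) k) k + \sum_(k < m) th (move_item Y j (X j) k) k
  = \sum_(k < m) th (X k) k + \sum_(k < m) th (Y k) k.
Proof.
rewrite -!big_split; apply: eq_bigr => k _; rewrite !ffunE.
by case: eqP => [->|//]; exact: addrC.
Qed.

End ItemMoves.

Section BalancedMaximizer.
Variables (R : realType) (n m : nat).

Definition balance_cost (X : alloc n m) : R := - (sqcard_sum X)%:R.

Local Notation value := (am_value (fun _ : 'I_n => 1 : R) balance_cost).

Lemma balanced_valueE th X : value th X = \sum_(j < m) th (X j) j - (sqcard_sum X)%:R.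
Proof.
rewrite /am_value /balance_cost addrC; congr (_ - _).
under eq_bigr do rewrite mul1r.
rewrite (exchange_big_dep xpredT) //=; apply: eq_bigr => j _.
by rewrite (big_pred1 (X j)) // => i; rewrite inE eq_sym.
Qed.

Lemma balanced_maximizers_card (A B : alloc n m) th i :
  (forall X, value th X <= value th A) -> (forall X, value th X <= value th B) ->
  (#|bundle A i| <= #|bundle B i| + uphalf m)%N.
Proof.
move=> A_max B_max; rewrite leqNgt; apply/negP => gap.
have /subsetPn [j] : ~~ (bundle A i \subset bundle B i).
  by apply/negP => /subset_leq_card; lia.
rewrite !inE => /eqP Aj Bj.
have := sqcard_sum_exchange_lt Aj Bj gap; rewrite -(ltr_nat R) !natrD.
have := A_max (move_item A j (B j)); have := B_max (move_item B j i).
rewrite !balanced_valueE.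
have := move_item_swap th A B j; rewrite Aj; lra.
Qed.

End BalancedMaximizer.

Theorem mainTheorem10 (R : realType) (n m : nat) :
  (2 <= n)%N -> (1 <= m)%N ->
  exists I : {set {set alloc n m}}, in_Psi R I /\ (card_sens I <= uphalf m)%N.
Proof.
move=> n_ge2 _; have n_gt0 : (0 < n)%N by lia.
pose w : 'I_n -> R := fun=> 1.
pose f := am_argmax w (@balance_cost R n m) [ffun=> Ordinal n_gt0].
exists (indiff_complex f); split.
  exists f; split; last exact: indiff_complexP.
  by apply: affine_maximizer_am_argmax => i; exact: oner_neq0.
apply: card_sens_leq => F A B i; rewrite inE => /asboolP [th near] AF BF.
have optimal X : X \in F -> forall Y,
    am_value w (@balance_cost R n m) th Y <= am_value w (@balance_cost R n m) th X.
  by move=> XF; apply: diff_set_maximal (near X XF); exact: am_argmax_max.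
have := balanced_maximizers_card i (optimal A AF) (optimal B BF).
have := balanced_maximizers_card i (optimal B BF) (optimal A AF).
rewrite /Cd; lia.
Qed.
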